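(* Let $\mathcal{M}=(W,R,V)$ be a Kripke model, let $\Gamma=(\mathrm{card}(W))^+$ be the successor cardinal of the cardinality of $W$, let $w\in W$ and let $\varphi$ be a sentence of the modal $\mu$-calculus. Then $\mathcal{M},w\vDash\varphi$ (standard semantics) if and only if $\mathcal{M},w\Vdash^\Gamma\varphi$, i.e. Eloise has a winning strategy in the $\Gamma$-bounded evaluation game $(\mathcal{M},w,\varphi,\Gamma)$.
   Context: Formulae: $\varphi ::= p \mid \neg p \mid X \mid \varphi\vee\varphi \mid \varphi\wedge\varphi \mid \Diamond\varphi \mid \Box\varphi \mid \mu X\varphi \mid \nu X\varphi$ ($p$ proposition symbols, $X$ label symbols). Standard semantics with assignments $s$ of subsets of $W$ to label symbols: atoms, $X$ (iff $w\in s(X)$), Boolean and modal connectives as usual; $\mathcal{M},w\vDash_s\mu X\psi$ (resp. $\nu X\psi$) iff $w$ belongs to the least (resp. greatest) fixed point of the monotone operator $A\mapsto\{v\in W\mid\mathcal{M},v\vDash_{s[A/X]}\psi\}$. For sentences truth is independent of $s$. $\mathcal{M},w\Vdash^\Gamma\varphi$ means Eloise has a winning strategy in the $\Gamma$-bounded evaluation game $(\mathcal{M},w,\varphi,\Gamma)$, defined as follows. Positions $(v,\theta,c)$ with $v\in W$, $\theta$ a subformula occurrence of $\varphi$, and $c$ a clock mapping from the occurrences of the form $\mu X\psi$ / $\nu X\psi$ in $\varphi$ to ordinals $\le\Gamma$; initially $(w,\varphi,c_0)$ with $c_0\equiv\Gamma$. At $p$ (resp. $\neg p$) Eloise wins iff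 $v\in V(p)$ (resp. $v\notin V(p)$), else Abelard; at $\vee$/$\Diamond$ Eloise chooses a disjunct / an $R$-successor (losing if there is none), at $\wedge$/$\Box$ Abelard chooses a conjunct / an $R$-successor (losing if there is none); at $\mu X\psi$ Eloise, at $\nu X\psi$ Abelard sets the clock of that occurrence to some $\gamma<\Gamma$ and play continues at $\psi$; at an atomic $X$ whose nearest binder $\mathrm{rf}(X)\in\{\mu X\psi,\nu X\psi\}$ has clock value $\gamma$: if $\gamma=0$ the binder's owner (Eloise for $\mu$, Abelard for $\nu$) loses; otherwise the owner chooses $\gamma'<\gamma$, the binder's clock becomes $\gamma'$, the clocks of all $\mu/\nu$-occurrences inside $\psi$ are reset to $\Gamma$, others unchanged, and play continues at $(v,\psi,\cdot)$. A winning strategy for Eloise is a function of positions prescribing her moves so that she wins every play following it. *)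

From Stdlib Require Import List Bool Arith.
Import ListNotations.

Inductive form : Type :=
| PAtom : nat -> form
| NAtom : nat -> form
| LVar  : nat -> form
| FOr   : form -> form -> form
| FAnd  : form -> form -> form
| FDia  : form -> form
| FBox  : form -> form
| FMu   : nat -> form -> form
| FNu   : nat -> form -> form.

Fixpoint closed_under (bd : list nat) (f : form) : Prop :=
  match f with
  | PAtom _ | NAtom _ => True
  | LVar X => In X bd
  | FOr a b | FAnd a b => closed_under bd a /\ closed_under bd b
  | FDia a | FBox a => closed_under bd a
  | FMu X a | FNu X a => closed_under (X :: bd) a
  end.

Definition sentence (f : form) : Prop := closed_under [] f.

Definition upd {W : Type} (s : nat -> W -> Prop) (X : nat) (A : W -> Prop)
  : nat -> W -> Prop := fun Y => if Nat.eqb Y X then A else s Y.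

Fixpoint sat {W : Type} (R : W -> W -> Prop) (V : nat -> W -> Prop)
  (s : nat -> W -> Prop) (f : form) (w : W) {struct f} : Prop :=
  match f with
  | PAtom p => V p w
  | NAtom p => ~ V p w
  | LVar X => s X w
  | FOr a b => sat R V s a w \/ sat R V s b w
  | FAnd a b => sat R V s a w /\ sat R V s b w
  | FDia a => exists v, R w v /\ sat R V s a v
  | FBox a => forall v, R w v -> sat R V s a v
  | FMu X a =>
      exists A : W -> Prop,
        (forall v, A v <-> sat R V (upd s X A) a v) /\
        (forall B : W -> Prop, (forall v, B v <-> sat R V (upd s X B) a v) ->
            forall v, A v -> B v) /\
        A w
  | FNu X a =>
      exists A : W -> Prop,
        (forall v, A v <-> sat R V (upd s X A) a v) /\
        (forall B : W -> Prop, (forall v, B v <-> sat R V (upd s X B) a v) ->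
            forall v, B v -> A v) /\
        A w
  end.

(* M, w |= phi for a sentence phi (truth independent of the assignment;
   we use the empty assignment). *)
Definition models {W : Type} (R : W -> W -> Prop) (V : nat -> W -> Prop)
  (w : W) (f : form) : Prop := sat R V (fun _ _ => False) f w.

(* (G, lt) is a well-order of order type card(W)^+ : the elements of G are
   the ordinals < Gamma. *)
Definition is_succ_card_of (W : Type) (G : Type) (lt : G -> G -> Prop) : Prop :=
  (forall a, ~ lt a a) /\
  (forall a b c, lt a b -> lt b c -> lt a c) /\
  (forall a b, lt a b \/ a = b \/ lt b a) /\
  well_founded lt /\
  (forall g : G, exists f : {x : G | lt x g} -> W,
      forall x y, f x = f y -> x = y) /\
  ~ (exists f : G -> W, forall x y, f x = f y -> x = y).

(* Clock values: ordinals <= Gamma, i.e. Some g (g < Gamma) or None (= Gamma). *)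
Definition clt {G : Type} (lt : G -> G -> Prop) (a b : option G) : Prop :=
  match a, b with
  | Some x, Some y => lt x y
  | Some _, None => True
  | None, _ => False
  end.

Definition child (f : form) (b : bool) : option form :=
  match f with
  | FOr a c | FAnd a c => Some (if b then c else a)
  | FDia a | FBox a | FMu _ a | FNu _ a => if b then None else Some a
  | _ => None
  end.

Fixpoint sub (f : form) (p : list bool) : option form :=
  match p with
  | [] => Some f
  | b :: p' => match child f b with Some g => sub g p' | None => None end
  end.

Definition binds (f : form) (X : nat) : bool :=
  match f with FMu Y _ | FNu Y _ => Nat.eqb Y X | _ => false end.

(* rf: path of the nearest binder of X strictly above the occurrence at p *)
Fixpoint rf (f : form) (p : list bool) (X : nat) : option (list bool) :=
  match p with
  | [] => None
  | b :: p' =>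
      match child f b with
      | None => None
      | Some g =>
          match rf g p' X with
          | Some q => Some (b :: q)
          | None => if binds f X then Some [] else None
          end
      end
  end.

Fixpoint prefixb (q r : list bool) : bool :=
  match q, r with
  | [], _ => true
  | a :: q', b :: r' => Bool.eqb a b && prefixb q' r'
  | _ :: _, [] => false
  end.

Definition path_eqb (q r : list bool) : bool := prefixb q r && prefixb r q.

(* A position: a world, a subformula occurrence (path into phi) and a clock,
   given as a map on all paths (only values at mu/nu occurrences matter). *)
Record pos (W G : Type) : Type := mkpos
  { pw : W; pp : list bool; pc : list bool -> option G }.
Arguments mkpos {W G}.
Arguments pw {W G}.
Arguments pp {W G}.
Arguments pc {W G}.

Section Game.
Context {W : Type} (R : W -> W -> Prop) (V : nat -> W -> Prop)
        {G : Type} (lt : G -> G -> Prop) (phi : form).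

(* Some b: terminal position, Eloise wins iff b. *)
Definition terminal (P : pos W G) : option Prop :=
  match sub phi (pp P) with
  | None => Some False
  | Some (PAtom q) => Some (V q (pw P))
  | Some (NAtom q) => Some (~ V q (pw P))
  | Some (LVar X) => match rf phi (pp P) X with
                     | None => Some False
                     | Some _ => None
                     end
  | _ => None
  end.

Definition eloise_turn (P : pos W G) : bool :=
  match sub phi (pp P) with
  | Some (FOr _ _) | Some (FDia _) | Some (FMu _ _) => true
  | Some (LVar X) =>
      match rf phi (pp P) X with
      | Some q => match sub phi q with Some (FMu _ _) => true | _ => false end
      | None => true
      end
  | _ => false
  end.

(* Legal moves.  A player with no legal move loses (no successor at a
   diamond/box; clock value 0 at an atomic X). *)
Definition move (P P' : pos W G) : Prop :=
  match sub phi (pp P) with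
  | Some (FOr _ _) | Some (FAnd _ _) =>
      pw P' = pw P /\ (forall r, pc P' r = pc P r) /\
      (pp P' = pp P ++ [false] \/ pp P' = pp P ++ [true])
  | Some (FDia _) | Some (FBox _) =>
      R (pw P) (pw P') /\ pp P' = pp P ++ [false] /\ (forall r, pc P' r = pc P r)
  | Some (FMu _ _) | Some (FNu _ _) =>
      pw P' = pw P /\ pp P' = pp P ++ [false] /\
      exists g : G, forall r,
        pc P' r = if path_eqb r (pp P) then Some g else pc P r
  | Some (LVar X) =>
      match rf phi (pp P) X with
      | Some q =>
          pw P' = pw P /\ pp P' = q ++ [false] /\
          exists g : G, clt lt (Some g) (pc P q) /\
            forall r, pc P' r =
              if path_eqb r q then Some g
              else if prefixb (q ++ [false]) r then None
              else pc P r
      | None => False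
      end
  | _ => False
  end.

Inductive ewins (sigma : pos W G -> pos W G) : pos W G -> Prop :=
| ew_term : forall P (b : Prop), terminal P = Some b -> b -> ewins sigma P
| ew_eloise : forall P, terminal P = None -> eloise_turn P = true ->
    move P (sigma P) -> ewins sigma (sigma P) -> ewins sigma P
| ew_abelard : forall P, terminal P = None -> eloise_turn P = false ->
    (forall P', move P P' -> ewins sigma P') -> ewins sigma P.

Definition game_holds (w : W) : Prop :=
  exists sigma : pos W G -> pos W G,
    ewins sigma (mkpos w [] (fun _ => None)).

End Game.

From Stdlib Require Import List Bool Arith Lia Wellfounded ClassicalEpsilon
  FunctionalExtensionality PropExtensionality.
Import ListNotations.

(* Each position of the bounded game carries an assignment that interprets every variable
   bound on the current path by the approximant of its binder at the binder's clock. Truth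
   of the current subformula under that assignment is an invariant of the game: at a
   terminal position it holds iff Eloise wins, at Eloise's positions iff it holds after
   some move, at Abelard's iff it holds after every move. Two facts make this work.
   Approximants indexed by ordinals below Gamma = card(W)^+ reach the fixed points, since
   otherwise every stage would add a new point of W and Gamma would inject into W. And
   every move lowers the clocks along the current path lexicographically, so all plays
   are finite and the invariant yields a winning strategy. *)

Lemma prefixb_refl r : prefixb r r = true.
Proof. induction r as [|a r IH]; simpl; [reflexivity|]. now rewrite eqb_reflx, IH. Qed.

Lemma prefixb_length r s : prefixb r s = true -> length r <= length s.
Proof.
  revert s; induction r as [|a r IH]; intros [|b s] H; simpl in *; try lia; try discriminate.
  apply andb_true_iff in H as [_ H]. apply IH in H. lia.
Qed.

Lemma prefixb_shorter r q : length r < length q -> prefixb q r = false.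
Proof. intro H. destruct (prefixb q r) eqn:E; auto. apply prefixb_length in E. lia. Qed.

Lemma path_eqb_refl q : path_eqb q q = true.
Proof. unfold path_eqb. now rewrite prefixb_refl. Qed.

Lemma path_eqb_shorter r q : length r < length q -> path_eqb r q = false.
Proof. intro H. unfold path_eqb. now rewrite (prefixb_shorter r q H), andb_false_r. Qed.

Lemma firstn_app_le {A} i (q t : list A) : i <= length q -> firstn i (q ++ t) = firstn i q.
Proof. intro H. rewrite firstn_app. replace (i - length q) with 0 by lia. apply app_nil_r. Qed.

Lemma length_proper_prefix {A} (r t q : list A) : q = r ++ t -> t <> [] -> length r < length q.
Proof. intros -> Ht. rewrite length_app. destruct t; [congruence | simpl; lia]. Qed.

Lemma sub_app f p p' :
  sub f (p ++ p') = match sub f p with Some g => sub g p' | None => None end.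
Proof. revert f; induction p as [|b p IH]; intros f; simpl; auto. destruct (child f b); auto. Qed.

Fixpoint fsize (f : form) : nat :=
  match f with
  | FOr a b | FAnd a b => S (fsize a + fsize b)
  | FDia a | FBox a | FMu _ a | FNu _ a => S (fsize a)
  | _ => 0
  end.

Lemma sub_length f p g : sub f p = Some g -> length p <= fsize f.
Proof.
  revert f; induction p as [|b p IH]; intros f H; simpl in *; [lia|].
  destruct (child f b) eqn:Hc; [|discriminate]. apply IH in H.
  destruct f; simpl in Hc; try discriminate; destruct b; inversion Hc; subst; simpl; lia.
Qed.

Lemma rf_binder f p X q : rf f p X = Some q ->
  exists a t, (sub f q = Some (FMu X a) \/ sub f q = Some (FNu X a)) /\ p = q ++ false :: t.
Proof.
  revert f q; induction p as [|b p IH]; intros f q H; simpl in H; [discriminate|].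
  destruct (child f b) as [g|] eqn:Hc; [|discriminate].
  destruct (rf g p X) eqn:Hr.
  - injection H as <-. destruct (IH _ _ Hr) as (a & t & Hq & ->).
    exists a, t. simpl. now rewrite Hc.
  - destruct (binds f X) eqn:Hb; [|discriminate]. injection H as <-.
    destruct f; simpl in Hb; try discriminate; apply Nat.eqb_eq in Hb as ->;
      destruct b; simpl in Hc; try discriminate; injection Hc as ->; exists g, p; simpl; auto.
Qed.

Definition monotone {W : Type} (F : (W -> Prop) -> W -> Prop) : Prop :=
  forall A B : W -> Prop, (forall v, A v -> B v) -> forall v, F A v -> F B v.

Section KnasterTarski.
Context {W : Type} (F : (W -> Prop) -> W -> Prop) (F_mono : monotone F).

Definition lfp : W -> Prop := fun v => forall B, (forall u, F B u -> B u) -> B v.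
Definition gfp : W -> Prop := fun v => exists B, (forall u, B u -> F B u) /\ B v.
Definition fixpoint (A : W -> Prop) : Prop := forall v, A v <-> F A v.

Lemma lfp_least B : (forall u, F B u -> B u) -> forall v, lfp v -> B v.
Proof. intros H v Hv. now apply Hv. Qed.

Lemma lfp_fold v : F lfp v -> lfp v.
Proof. intros H B HB. apply HB. apply (F_mono lfp); auto. intros u Hu. now apply Hu. Qed.

Lemma lfp_unfold v : lfp v -> F lfp v.
Proof. intro H. apply H. intros u Hu. apply (F_mono (F lfp)); auto. apply lfp_fold. Qed.

Lemma gfp_greatest B : (forall u, B u -> F B u) -> forall v, B v -> gfp v.
Proof. intros H v Hv. now exists B. Qed.

Lemma gfp_unfold v : gfp v -> F gfp v.
Proof. intros [B [HB Hv]]. apply (F_mono B); auto. intros u Hu. now exists B. Qed.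

Lemma gfp_fold v : F gfp v -> gfp v.
Proof.
  intro H. exists (F gfp). split; auto.
  intros u Hu. apply (F_mono gfp); auto. apply gfp_unfold.
Qed.

Lemma least_fixpoint_iff_lfp w :
  (exists A, fixpoint A /\ (forall B, fixpoint B -> forall v, A v -> B v) /\ A w) <-> lfp w.
Proof.
  split.
  - intros (A & _ & Hleast & HA). apply (Hleast lfp); auto.
    intro u; split; [apply lfp_unfold | apply lfp_fold].
  - intro H. exists lfp. repeat split; auto.
    + apply lfp_unfold.
    + apply lfp_fold.
    + intros B HB. apply lfp_least. intro u. apply HB.
Qed.

Lemma greatest_fixpoint_iff_gfp w :
  (exists A, fixpoint A /\ (forall B, fixpoint B -> forall v, B v -> A v) /\ A w) <-> gfp w.
Proof.
  split.
  - intros (A & HA & _ & Hw). apply (gfp_greatest A); auto. apply HA.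
  - intro H. exists gfp. repeat split; auto.
    + apply gfp_unfold.
    + apply gfp_fold.
    + intros B HB. apply gfp_greatest. apply HB.
Qed.

End KnasterTarski.

Lemma lfp_le {W} (F F' : (W -> Prop) -> W -> Prop) : monotone F' ->
  (forall A v, F A v -> F' A v) -> forall v, lfp F v -> lfp F' v.
Proof. intros HF' HFF'. apply lfp_least. intros u Hu. now apply lfp_fold, HFF'. Qed.

Lemma gfp_le {W} (F F' : (W -> Prop) -> W -> Prop) : monotone F ->
  (forall A v, F A v -> F' A v) -> forall v, gfp F v -> gfp F' v.
Proof. intros HF HFF'. apply gfp_greatest. intros u Hu. now apply HFF', gfp_unfold. Qed.

Section Approximants.
Context {W G : Type} (lt : G -> G -> Prop) (lt_wf : well_founded lt).
Context (F : (W -> Prop) -> W -> Prop).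

Definition mu_apx : G -> W -> Prop :=
  Fix lt_wf (fun _ => W -> Prop) (fun g rec v => exists b (h : lt b g), F (rec b h) v).
Definition nu_apx : G -> W -> Prop :=
  Fix lt_wf (fun _ => W -> Prop) (fun g rec v => forall b (h : lt b g), F (rec b h) v).

Lemma mu_apx_iff g v : mu_apx g v <-> exists b, lt b g /\ F (mu_apx b) v.
Proof.
  unfold mu_apx at 1. rewrite Fix_eq.
  - split; intros [b [h H]]; exists b; eauto.
  - intros x f1 f2 Hf. apply functional_extensionality; intro u.
    apply propositional_extensionality; split; intros [b [h H]]; exists b, h;
      [rewrite <- Hf | rewrite Hf]; exact H.
Qed.

Lemma nu_apx_iff g v : nu_apx g v <-> forall b, lt b g -> F (nu_apx b) v.
Proof.
  unfold nu_apx at 1. rewrite Fix_eq.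
  - split; intros H b h; exact (H b h).
  - intros x f1 f2 Hf. apply functional_extensionality; intro u.
    apply propositional_extensionality; split; intros H b h;
      [rewrite <- Hf | rewrite Hf]; apply H.
Qed.

Context (F_mono : monotone F).

Lemma mu_apx_lfp g v : mu_apx g v -> lfp F v.
Proof.
  revert v. induction g as [g IH] using (well_founded_ind lt_wf). intros v H.
  apply mu_apx_iff in H as [b [Hb H]].
  apply (lfp_fold F F_mono), (F_mono (mu_apx b)); auto.
  intros u Hu. now apply (IH b).
Qed.

Lemma gfp_nu_apx g v : gfp F v -> nu_apx g v.
Proof.
  revert v. induction g as [g IH] using (well_founded_ind lt_wf). intros v H.
  apply nu_apx_iff. intros b Hb.
  apply (F_mono (gfp F)); [intros u Hu; now apply IH | now apply gfp_unfold].
Qed.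

(* Both approximant sequences stabilise below Gamma: a point leaving the sequence at each
   stage would give an injection of G into W. *)
Context (lt_total : forall a b, lt a b \/ a = b \/ lt b a)
        (G_not_inj : ~ exists f : G -> W, forall x y, f x = f y -> x = y).

Lemma mu_apx_closed : exists d, forall v, F (mu_apx d) v -> mu_apx d v.
Proof.
  apply NNPP. intro Hn.
  assert (Hnew : forall d, exists v, F (mu_apx d) v /\ ~ mu_apx d v).
  { intro d. apply NNPP. intro H1. apply Hn. exists d. intros v Hv.
    apply NNPP. intro H2. apply H1. now exists v. }
  apply choice in Hnew as [f Hf]. apply G_not_inj. exists f. intros x y Hxy.
  assert (Hfresh : forall x y, lt x y -> f x = f y -> False).
  { intros x' y' Hlt Heq. apply (proj2 (Hf y')), mu_apx_iff.
    exists x'. rewrite <- Heq. split; [exact Hlt | apply Hf]. }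
  destruct (lt_total x y) as [Hl|[He|Hl]]; [exfalso; eauto | exact He | exfalso; eauto].
Qed.

Lemma nu_apx_consistent : exists d, forall v, nu_apx d v -> F (nu_apx d) v.
Proof.
  apply NNPP. intro Hn.
  assert (Hnew : forall d, exists v, nu_apx d v /\ ~ F (nu_apx d) v).
  { intro d. apply NNPP. intro H1. apply Hn. exists d. intros v Hv.
    apply NNPP. intro H2. apply H1. now exists v. }
  apply choice in Hnew as [f Hf]. apply G_not_inj. exists f. intros x y Hxy.
  assert (Hfresh : forall x y, lt x y -> f x = f y -> False).
  { intros x' y' Hlt Heq. apply (proj2 (Hf x')). rewrite Heq.
    exact (proj1 (nu_apx_iff y' (f y')) (proj1 (Hf y')) x' Hlt). }
  destruct (lt_total x y) as [Hl|[He|Hl]]; [exfalso; eauto | exact He | exfalso; eauto].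
Qed.

Lemma lfp_iff_mu_apx v : lfp F v <-> exists b, F (mu_apx b) v.
Proof.
  split.
  - intro H. destruct mu_apx_closed as [d Hd].
    destruct (proj1 (mu_apx_iff d v) (lfp_least F _ Hd v H)) as [b [_ Hb]]. eauto.
  - intros [b H]. apply (lfp_fold F F_mono), (F_mono (mu_apx b)); auto.
    apply mu_apx_lfp.
Qed.

Lemma gfp_iff_nu_apx v : gfp F v <-> forall b, F (nu_apx b) v.
Proof.
  split.
  - intros H b. apply (F_mono (gfp F)); [apply gfp_nu_apx | now apply gfp_unfold].
  - intro H. destruct nu_apx_consistent as [d Hd].
    apply (gfp_fold F F_mono), (F_mono (nu_apx d)); auto.
    apply (gfp_greatest F _ Hd).
Qed.

(* A clock value [None] stands for Gamma, whose approximant is the fixed point itself. *)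
Definition mu_clock (o : option G) : W -> Prop :=
  match o with Some g => mu_apx g | None => lfp F end.
Definition nu_clock (o : option G) : W -> Prop :=
  match o with Some g => nu_apx g | None => gfp F end.

Lemma mu_clock_iff o v : mu_clock o v <-> exists b, clt lt (Some b) o /\ F (mu_apx b) v.
Proof.
  destruct o as [g|]; simpl; [apply mu_apx_iff|].
  rewrite lfp_iff_mu_apx. split; intros [b H]; exists b; tauto.
Qed.

Lemma nu_clock_iff o v : nu_clock o v <-> forall b, clt lt (Some b) o -> F (nu_apx b) v.
Proof.
  destruct o as [g|]; simpl; [apply nu_apx_iff|].
  rewrite gfp_iff_nu_apx. split; auto.
Qed.

End Approximants.

Section Semantics.
Context {W : Type} (R : W -> W -> Prop) (V : nat -> W -> Prop).

Definition sat_op (s : nat -> W -> Prop) (X : nat) (a : form) : (W -> Prop) -> W -> Prop :=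
  fun B v => sat R V (upd s X B) a v.

Lemma upd_mono (s s' : nat -> W -> Prop) X (A B : W -> Prop) :
  (forall Y v, s Y v -> s' Y v) -> (forall v, A v -> B v) ->
  forall Y v, upd s X A Y v -> upd s' X B Y v.
Proof. intros Hs HAB Y v. unfold upd. destruct (Nat.eqb Y X); auto. Qed.

Lemma sat_mono a : forall s s' : nat -> W -> Prop, (forall Y v, s Y v -> s' Y v) ->
  forall v, sat R V s a v -> sat R V s' a v.
Proof.
  induction a as [p|p|Y|a IHa b IHb|a IHa b IHb|a IHa|a IHa|X a IHa|X a IHa];
    intros s s' Hs v H; simpl in *; auto.
  - destruct H; [left|right]; eauto.
  - destruct H; split; eauto.
  - destruct H as [u [Hu H]]; eauto.
  - intros u Hu; eauto.
  - assert (Hop : forall s, monotone (sat_op s X a))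
      by (intros s0 A B HAB; apply IHa, upd_mono; auto).
    apply (least_fixpoint_iff_lfp (sat_op s' X a) (Hop s')).
    apply (least_fixpoint_iff_lfp (sat_op s X a) (Hop s)) in H.
    revert v H. apply lfp_le; [apply Hop|]. intros A v. apply IHa, upd_mono; auto.
  - assert (Hop : forall s, monotone (sat_op s X a))
      by (intros s0 A B HAB; apply IHa, upd_mono; auto).
    apply (greatest_fixpoint_iff_gfp (sat_op s' X a) (Hop s')).
    apply (greatest_fixpoint_iff_gfp (sat_op s X a) (Hop s)) in H.
    revert v H. apply gfp_le; [apply Hop|]. intros A v. apply IHa, upd_mono; auto.
Qed.

Lemma sat_op_mono s X a : monotone (sat_op s X a).
Proof. intros A B HAB. apply sat_mono, upd_mono; auto. Qed.

Lemma sat_mu_lfp s X a v : sat R V s (FMu X a) v <-> lfp (sat_op s X a) v.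
Proof. exact (least_fixpoint_iff_lfp _ (sat_op_mono s X a) v). Qed.

Lemma sat_nu_gfp s X a v : sat R V s (FNu X a) v <-> gfp (sat_op s X a) v.
Proof. exact (greatest_fixpoint_iff_gfp _ (sat_op_mono s X a) v). Qed.

End Semantics.

Definition lexN {A} (r : A -> A -> Prop) (N : nat) (f g : nat -> A) : Prop :=
  exists k, k < N /\ (forall i, i < k -> f i = g i) /\ r (f k) (g k).

Lemma lexN_wf {A} (r : A -> A -> Prop) : well_founded r -> forall N, well_founded (lexN r N).
Proof.
  intros Hr N. induction N as [|N IH]; intro f.
  - constructor. intros g [k [Hk _]]. lia.
  - assert (Hacc : forall a, Acc r a -> forall t, Acc (lexN r N) t -> forall f, f 0 = a ->
              (forall i, f (S i) = t i) -> Acc (lexN r (S N)) f).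
    { intros a Ha. induction Ha as [a _ IHa]. intros t Ht. induction Ht as [t _ IHt].
      intros f0 H0 HS. constructor. intros g [[|k] [Hk [Heq Hlt]]].
      - rewrite H0 in Hlt. exact (IHa (g 0) Hlt _ (IH _) g eq_refl (fun i => eq_refl)).
      - apply (IHt (fun i => g (S i))).
        + exists k. split; [lia|]. split.
          * intros i Hi. rewrite <- HS. apply Heq. lia.
          * now rewrite <- HS.
        + rewrite Heq by lia. exact H0.
        + reflexivity. }
    exact (Hacc (f 0) (Hr _) _ (IH _) f eq_refl (fun i => eq_refl)).
Qed.

Lemma clt_wf {G} (lt : G -> G -> Prop) : well_founded lt -> well_founded (clt lt).
Proof.
  intros H o.
  assert (HS : forall g, Acc (clt lt) (Some g)).
  { intro g. induction (H g) as [g _ IHg]. constructor.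
    intros [y|] Hy; simpl in Hy; [now apply IHg | contradiction]. }
  destruct o as [g|]; [apply HS|]. constructor. intros [y|] Hy; [apply HS | contradiction].
Qed.

Section InvariantStrategy.
Context {W G : Type} (R : W -> W -> Prop) (V : nat -> W -> Prop) (lt : G -> G -> Prop).
Context (phi : form) (I : pos W G -> Prop).

Definition invariant_strategy (P : pos W G) : pos W G :=
  match excluded_middle_informative (exists P', move R lt phi P P' /\ I P') with
  | left H => proj1_sig (constructive_indefinite_description _ H)
  | right _ => P
  end.

Lemma invariant_strategy_move P : (exists P', move R lt phi P P' /\ I P') ->
  move R lt phi P (invariant_strategy P) /\ I (invariant_strategy P).
Proof.
  intro H. unfold invariant_strategy.
  destruct (excluded_middle_informative _) as [H'|H']; [|contradiction].
  exact (proj2_sig (constructive_indefinite_description _ H')).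
Qed.

Lemma invariant_strategy_wins (dec : pos W G -> pos W G -> Prop) : well_founded dec ->
  (forall P P', move R lt phi P P' -> dec P' P) ->
  (forall P b, I P -> terminal V phi P = Some b -> b) ->
  (forall P, I P -> terminal V phi P = None -> eloise_turn phi P = true ->
     exists P', move R lt phi P P' /\ I P') ->
  (forall P, I P -> terminal V phi P = None -> eloise_turn phi P = false ->
     forall P', move R lt phi P P' -> I P') ->
  forall P, I P -> ewins R V lt phi invariant_strategy P.
Proof.
  intros dec_wf move_dec I_terminal I_eloise I_abelard P.
  induction P as [P IH] using (well_founded_ind dec_wf). intro HP.
  destruct (terminal V phi P) as [b|] eqn:Ht.
  { exact (ew_term _ _ _ _ _ P b Ht (I_terminal P b HP Ht)). }
  destruct (eloise_turn phi P) eqn:Hturn.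
  - destruct (invariant_strategy_move P (I_eloise P HP Ht Hturn)) as [Hm HI].
    apply ew_eloise; [exact Ht | exact Hturn | exact Hm | apply IH; auto].
  - apply ew_abelard; auto. intros P' Hm. apply IH; [now apply move_dec | eapply I_abelard; eauto].
Qed.

End InvariantStrategy.

Section Game.
Context {W : Type} (R : W -> W -> Prop) (V : nat -> W -> Prop).
Context {G : Type} (lt : G -> G -> Prop) (lt_wf : well_founded lt).
Context (phi : form).

Definition is_binder (f : form) : bool :=
  match f with FMu _ _ | FNu _ _ => true | _ => false end.

Definition binder_upd (f : form) (s : nat -> W -> Prop) (o : option G) : nat -> W -> Prop :=
  match f with
  | FMu X a => upd s X (mu_clock lt lt_wf (sat_op R V s X a) o)
  | FNu X a => upd s X (nu_clock lt lt_wf (sat_op R V s X a) o)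
  | _ => s
  end.

Fixpoint env (f : form) (s : nat -> W -> Prop) (p : list bool) (c : list bool -> option G)
  : nat -> W -> Prop :=
  match p with
  | [] => s
  | b :: p' => match child f b with
               | Some g => env g (binder_upd f s (c [])) p' (fun r => c (b :: r))
               | None => s
               end
  end.

Lemma env_snoc f s p c b g a : sub f p = Some g -> child g b = Some a ->
  env f s (p ++ [b]) c = binder_upd g (env f s p c) (c p).
Proof.
  revert f s c; induction p as [|b' p IH]; intros f s c Hs Hc; simpl in *.
  - injection Hs as ->. now rewrite Hc.
  - destruct (child f b'); [now apply IH | discriminate].
Qed.

Lemma env_ext f s p c c' : (forall r t, p = r ++ t -> t <> [] -> c r = c' r) ->
  env f s p c = env f s p c'.
Proof.
  revert f s c c'; induction p as [|b p IH]; intros f s c c' H; simpl; auto.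
  destruct (child f b); auto.
  rewrite (H [] (b :: p)) by (auto; discriminate).
  apply IH. intros r t Hr Ht. apply (H (b :: r) t); simpl; congruence.
Qed.

Lemma env_rf_none f s p c X : rf f p X = None -> env f s p c X = s X.
Proof.
  revert f s c; induction p as [|b p IH]; intros f s c H; simpl in *; auto.
  destruct (child f b) as [g|]; auto.
  destruct (rf g p X) eqn:Hr; [discriminate|].
  rewrite IH by exact Hr.
  destruct f; simpl in H |- *; auto; unfold upd; rewrite Nat.eqb_sym;
    destruct (Nat.eqb n X); auto; discriminate.
Qed.

Lemma env_rf f s p c X q g : rf f p X = Some q -> sub f q = Some g ->
  env f s p c X = binder_upd g (env f s q c) (c q) X.
Proof.
  revert f s c q; induction p as [|b p IH]; intros f s c q H Hq; simpl in H; [discriminate|].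
  destruct (child f b) as [f'|] eqn:Hc; [|discriminate]. simpl. rewrite Hc.
  destruct (rf f' p X) eqn:Hr.
  - injection H as <-. simpl in Hq. rewrite Hc in Hq.
    rewrite (IH _ _ _ _ Hr Hq). simpl. now rewrite Hc.
  - destruct (binds f X); [|discriminate]. injection H as <-. injection Hq as ->.
    now rewrite env_rf_none.
Qed.

Definition pos_env (p : list bool) (c : list bool -> option G) : nat -> W -> Prop :=
  env phi (fun _ _ => False) p c.

Definition holds_at (P : pos W G) : Prop :=
  match sub phi (pp P) with
  | Some psi => sat R V (pos_env (pp P) (pc P)) psi (pw P)
  | None => False
  end.

Definition clock_bind (c : list bool -> option G) p b : list bool -> option G :=
  fun r => if path_eqb r p then Some b else c r.
Definition clock_loop (c : list bool -> option G) q b : list bool -> option G :=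
  fun r => if path_eqb r q then Some b else if prefixb (q ++ [false]) r then None else c r.

Lemma holds_at_sub v p c psi : sub phi p = Some psi ->
  holds_at (mkpos v p c) <-> sat R V (pos_env p c) psi v.
Proof. intro Hs. unfold holds_at; simpl. now rewrite Hs. Qed.

Lemma holds_at_child v p c b g a : sub phi p = Some g -> child g b = Some a ->
  is_binder g = false -> holds_at (mkpos v (p ++ [b]) c) <-> sat R V (pos_env p c) a v.
Proof.
  intros Hs Hc Hb. rewrite (holds_at_sub _ _ _ a) by (rewrite sub_app, Hs; simpl; now rewrite Hc).
  unfold pos_env. erewrite env_snoc by eauto.
  destruct g; simpl in Hb; try discriminate; reflexivity.
Qed.

Lemma holds_at_bind v p c b g a : sub phi p = Some g -> child g false = Some a ->
  holds_at (mkpos v (p ++ [false]) (clock_bind c p b)) <->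
  sat R V (binder_upd g (pos_env p c) (Some b)) a v.
Proof.
  intros Hs Hc. rewrite (holds_at_sub _ _ _ a) by (rewrite sub_app, Hs; simpl; now rewrite Hc).
  unfold pos_env. erewrite env_snoc by eauto.
  unfold clock_bind at 2. rewrite path_eqb_refl. erewrite env_ext; [reflexivity|].
  intros r t Hr Ht. unfold clock_bind. rewrite path_eqb_shorter; eauto using length_proper_prefix.
Qed.

Lemma holds_at_loop v q c b g a : sub phi q = Some g -> child g false = Some a ->
  holds_at (mkpos v (q ++ [false]) (clock_loop c q b)) <->
  sat R V (binder_upd g (pos_env q c) (Some b)) a v.
Proof.
  intros Hs Hc. rewrite (holds_at_sub _ _ _ a) by (rewrite sub_app, Hs; simpl; now rewrite Hc).
  unfold pos_env. erewrite env_snoc by eauto.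
  unfold clock_loop at 2. rewrite path_eqb_refl. erewrite env_ext; [reflexivity|].
  intros r t Hr Ht. pose proof (length_proper_prefix _ _ _ Hr Ht). unfold clock_loop.
  rewrite path_eqb_shorter, prefixb_shorter; auto. rewrite length_app; simpl; lia.
Qed.

Lemma holds_at_var v p c X q g : sub phi p = Some (LVar X) -> rf phi p X = Some q ->
  sub phi q = Some g -> holds_at (mkpos v p c) <-> binder_upd g (pos_env q c) (c q) X v.
Proof.
  intros Hs Hr Hq. rewrite (holds_at_sub _ _ _ _ Hs). simpl.
  unfold pos_env. now erewrite env_rf by eauto.
Qed.

Definition binder_at (p : list bool) : bool :=
  match sub phi p with Some g => is_binder g | None => false end.

(* Positions are ranked by the clocks of the binders along the current path, compared
   lexicographically from the root. [None] is the largest value: it marks indices beyond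
   the path, non-binder occurrences and clocks at Gamma, so descending into a subformula
   and looping back to a binder both lower the rank. *)
Definition rank (P : pos W G) (i : nat) : option (option G) :=
  if i <? length (pp P) then
    Some (if binder_at (firstn i (pp P)) then pc P (firstn i (pp P)) else None)
  else None.

Definition below (P' P : pos W G) : Prop :=
  lexN (clt (clt lt)) (S (fsize phi)) (rank P') (rank P).

Lemma below_wf : well_founded below.
Proof. apply (wf_inverse_image _ _ _ rank), lexN_wf, clt_wf, clt_wf, lt_wf. Qed.

Lemma descend_below v v' p c c' b g : sub phi p = Some g ->
  (forall r, length r < length p -> c' r = c r) ->
  below (mkpos v' (p ++ [b]) c') (mkpos v p c).
Proof.
  intros Hs Hc. exists (length p). split; [apply sub_length in Hs; lia|].
  unfold rank; simpl. rewrite length_app. simpl. split.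
  - intros i Hi. rewrite !(proj2 (Nat.ltb_lt _ _)) by lia. rewrite firstn_app_le by lia.
    rewrite Hc; auto. rewrite length_firstn. lia.
  - rewrite (proj2 (Nat.ltb_lt _ _)) by lia. now rewrite Nat.ltb_irrefl.
Qed.

Lemma loop_below v v' q t c b : binder_at q = true -> clt lt (Some b) (c q) ->
  below (mkpos v' (q ++ [false]) (clock_loop c q b)) (mkpos v (q ++ false :: t) c).
Proof.
  intros Hq Hb. exists (length q). split.
  { unfold binder_at in Hq. destruct (sub phi q) eqn:Hs; [|discriminate].
    apply sub_length in Hs. lia. }
  unfold rank, clock_loop; simpl. rewrite !length_app. simpl. split.
  - intros i Hi. rewrite !(proj2 (Nat.ltb_lt _ _)) by lia. rewrite !firstn_app_le by lia.
    rewrite path_eqb_shorter by (rewrite length_firstn; lia).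
    now rewrite prefixb_shorter by (rewrite length_firstn, length_app; simpl; lia).
  - rewrite !(proj2 (Nat.ltb_lt _ _)) by lia. rewrite !firstn_app_le, firstn_all by lia.
    now rewrite Hq, path_eqb_refl.
Qed.

Lemma move_below P P' : move R lt phi P P' -> below P' P.
Proof.
  destruct P as [v p c], P' as [v' p' c']. unfold move; simpl.
  destruct (sub phi p) as [g|] eqn:Hs; [|contradiction].
  destruct g as [| |X| | | | | |]; try contradiction.
  - destruct (rf phi p X) as [q|] eqn:Hr; [|contradiction].
    destruct (rf_binder _ _ _ _ Hr) as (a & t & Hq & ->).
    intros (-> & -> & b & Hb & Hc'). apply functional_extensionality in Hc'. subst c'.
    apply loop_below; [|exact Hb]. unfold binder_at. now destruct Hq as [-> | ->].
  - intros (-> & Hc' & [-> | ->]); eapply descend_below; eauto.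
  - intros (-> & Hc' & [-> | ->]); eapply descend_below; eauto.
  - intros (_ & -> & Hc'); eapply descend_below; eauto.
  - intros (_ & -> & Hc'); eapply descend_below; eauto.
  - intros (-> & -> & b & Hc'). eapply descend_below; eauto.
    intros r Hr. rewrite Hc'. now rewrite path_eqb_shorter.
  - intros (-> & -> & b & Hc'). eapply descend_below; eauto.
    intros r Hr. rewrite Hc'. now rewrite path_eqb_shorter.
Qed.

Lemma holds_at_terminal P b : terminal V phi P = Some b -> holds_at P <-> b.
Proof.
  destruct P as [v p c]. unfold terminal, holds_at; simpl.
  destruct (sub phi p) as [g|]; [|now injection 1 as <-].
  destruct g; simpl; try discriminate; try (injection 1 as <-; reflexivity).
  destruct (rf phi p n) eqn:Hr; [discriminate|]. injection 1 as <-.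
  unfold pos_env. now rewrite env_rf_none.
Qed.

Context (lt_total : forall a b, lt a b \/ a = b \/ lt b a)
        (G_not_inj : ~ exists f : G -> W, forall x y, f x = f y -> x = y).

Lemma holds_at_eloise P : terminal V phi P = None -> eloise_turn phi P = true ->
  holds_at P <-> exists P', move R lt phi P P' /\ holds_at P'.
Proof.
  destruct P as [v p c]. unfold terminal, eloise_turn, move; simpl.
  destruct (sub phi p) as [g|] eqn:Hs; [|discriminate].
  destruct g as [| |X|a1 a2| |a| |X a|]; try discriminate; intros Hterm Hturn.
  - destruct (rf phi p X) as [q|] eqn:Hr; [|discriminate Hterm].
    destruct (rf_binder _ _ _ _ Hr) as (a & t & [Hq|Hq] & ->); rewrite Hq in Hturn;
      [|discriminate].
    rewrite (holds_at_var _ _ _ _ _ _ Hs Hr Hq). simpl. unfold upd. rewrite Nat.eqb_refl.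
    rewrite mu_clock_iff by (apply sat_op_mono || assumption). split.
    + intros (b & Hb & H). exists (mkpos v (q ++ [false]) (clock_loop c q b)).
      rewrite (holds_at_loop _ _ _ _ _ a Hq eq_refl). split; [|exact H].
      simpl. split; [reflexivity|]. split; [reflexivity|]. now exists b.
    + intros ([v' p' c'] & Hm & H); simpl in Hm; destruct Hm as (-> & -> & b & Hb & Hc').
      apply functional_extensionality in Hc'. subst c'.
      exists b. split; [exact Hb|]. exact (proj1 (holds_at_loop _ _ _ _ _ a Hq eq_refl) H).
  - rewrite (holds_at_sub _ _ _ _ Hs). split.
    + intros [H|H]; [exists (mkpos v (p ++ [false]) c) | exists (mkpos v (p ++ [true]) c)];
        (split; [simpl; auto | erewrite holds_at_child; eauto]).
    + intros ([v' p' c'] & Hm & H); simpl in Hm; destruct Hm as (-> & Hc' & [-> | ->]);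
        apply functional_extensionality in Hc'; subst c'; [left|right];
        (erewrite <- holds_at_child; eauto).
  - rewrite (holds_at_sub _ _ _ _ Hs). split.
    + intros (u & Hu & H). exists (mkpos u (p ++ [false]) c).
      split; [simpl; auto | erewrite holds_at_child; eauto].
    + intros ([v' p' c'] & Hm & H); simpl in Hm; destruct Hm as (Hv & -> & Hc').
      apply functional_extensionality in Hc'; subst c'.
      exists v'. split; [exact Hv | erewrite <- holds_at_child; eauto].
  - rewrite (holds_at_sub _ _ _ _ Hs), sat_mu_lfp.
    rewrite (lfp_iff_mu_apx lt lt_wf _ (sat_op_mono R V _ X a) lt_total G_not_inj). split.
    + intros (b & H). exists (mkpos v (p ++ [false]) (clock_bind c p b)).
      rewrite (holds_at_bind _ _ _ _ _ a Hs eq_refl). split; [|exact H].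
      simpl. split; [reflexivity|]. split; [reflexivity|]. now exists b.
    + intros ([v' p' c'] & Hm & H); simpl in Hm; destruct Hm as (-> & -> & b & Hc').
      apply functional_extensionality in Hc'. subst c'.
      exists b. exact (proj1 (holds_at_bind _ _ _ _ _ a Hs eq_refl) H).
Qed.


Lemma holds_at_abelard P : terminal V phi P = None -> eloise_turn phi P = false ->
  holds_at P <-> forall P', move R lt phi P P' -> holds_at P'.
Proof.
  destruct P as [v p c]. unfold terminal, eloise_turn, move; simpl.
  destruct (sub phi p) as [g|] eqn:Hs; [|discriminate].
  destruct g as [| |X| |a1 a2| |a| |X a]; try discriminate; intros Hterm Hturn.
  - destruct (rf phi p X) as [q|] eqn:Hr; [|discriminate Hterm].
    destruct (rf_binder _ _ _ _ Hr) as (a & t & [Hq|Hq] & ->); rewrite Hq in Hturn;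
      [discriminate|].
    rewrite (holds_at_var _ _ _ _ _ _ Hs Hr Hq). simpl. unfold upd. rewrite Nat.eqb_refl.
    rewrite nu_clock_iff by (apply sat_op_mono || assumption). split.
    + intros H [v' p' c'] Hm. simpl in Hm. destruct Hm as (-> & -> & b & Hb & Hc').
      apply functional_extensionality in Hc'. subst c'.
      exact (proj2 (holds_at_loop _ _ _ _ _ a Hq eq_refl) (H b Hb)).
    + intros H b Hb. apply (holds_at_loop _ _ _ _ _ a Hq eq_refl), H.
      split; [reflexivity|]. split; [reflexivity|]. now exists b.
  - rewrite (holds_at_sub _ _ _ _ Hs). split.
    + intros [H1 H2] [v' p' c'] Hm. simpl in Hm. destruct Hm as (-> & Hc' & [-> | ->]);
        apply functional_extensionality in Hc'; subst c'.
      * now apply (holds_at_child _ _ _ _ _ a1 Hs).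
      * now apply (holds_at_child _ _ _ _ _ a2 Hs).
    + intro H. split.
      * apply (holds_at_child v p c false _ a1 Hs), H; simpl; auto.
      * apply (holds_at_child v p c true _ a2 Hs), H; simpl; auto.
  - rewrite (holds_at_sub _ _ _ _ Hs). split.
    + intros H [v' p' c'] Hm. simpl in Hm. destruct Hm as (Hv & -> & Hc').
      apply functional_extensionality in Hc'; subst c'.
      apply (holds_at_child _ _ _ _ _ a Hs); auto.
    + intros H u Hu. apply (holds_at_child u p c false _ a Hs), H; simpl; auto.
  - rewrite (holds_at_sub _ _ _ _ Hs), sat_nu_gfp.
    rewrite (gfp_iff_nu_apx lt lt_wf _ (sat_op_mono R V _ X a) lt_total G_not_inj). split.
    + intros H [v' p' c'] Hm. simpl in Hm. destruct Hm as (-> & -> & b & Hc').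
      apply functional_extensionality in Hc'. subst c'.
      exact (proj2 (holds_at_bind _ _ _ _ _ a Hs eq_refl) (H b)).
    + intros H b. apply (holds_at_bind _ _ _ _ _ a Hs eq_refl), H.
      split; [reflexivity|]. split; [reflexivity|]. now exists b.
Qed.

Lemma holds_at_winning : exists sigma, forall P, holds_at P -> ewins R V lt phi sigma P.
Proof.
  exists (invariant_strategy R lt phi holds_at). apply (invariant_strategy_wins _ _ _ _ _ below).
  - exact below_wf.
  - exact move_below.
  - intros P b HP Ht. now apply (holds_at_terminal P b Ht).
  - intros P HP Ht Hturn. now apply holds_at_eloise.
  - intros P HP Ht Hturn. now apply holds_at_abelard.
Qed.

Lemma ewins_holds_at sigma P : ewins R V lt phi sigma P -> holds_at P.
Proof.
  induction 1 as [P b Ht Hb | P Ht Hturn Hm _ IH | P Ht Hturn _ IH].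
  - now apply (holds_at_terminal P b Ht).
  - apply holds_at_eloise; eauto.
  - now apply holds_at_abelard.
Qed.

End Game.

Theorem mainTheorem5 (W : Type) (R : W -> W -> Prop) (V : nat -> W -> Prop)
  (G : Type) (lt : G -> G -> Prop) (HG : is_succ_card_of W G lt)
  (w : W) (phi : form) (Hphi : sentence phi) :
  models R V w phi <-> game_holds R V lt phi w.
Proof.
  destruct HG as (_ & _ & lt_total & lt_wf & _ & G_not_inj).
  change (models R V w phi) with (holds_at R V lt lt_wf phi (mkpos w [] (fun _ => None))).
  split.
  - intro H. destruct (holds_at_winning R V lt lt_wf phi lt_total G_not_inj) as [sigma Hsigma].
    exists sigma. now apply Hsigma.
  - intros [sigma Hwin]. exact (ewins_holds_at R V lt lt_wf phi lt_total G_not_inj sigma _ Hwin).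
Qed.
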